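(* The Collaborator Selection and Total Payment (CSTP) algorithm (described in the context) runs in time $O\big(|\mathbb{T}(\tau)|^{\max}\,|\mathbb{G}(\tau)|^{\max}\big)$, where $|\mathbb{G}(\tau)|^{\max}=\max_{v_i\in\mathcal{V}_s,\,t_{i,j}^\tau\in\mathbb{T}_i(\tau)}|\mathbb{G}_{i,j}(\tau)|$ and $|\mathbb{T}(\tau)|^{\max}=\max_{v_i\in\mathcal{V}_s}|\mathbb{T}_i(\tau)|$.
   Context: $\mathcal{V}_s$ is the set of satellites. For $v_i\in\mathcal{V}_s$, $\mathbb{T}_i(\tau)$ is a finite set of tasks and $\beta^\tau\ge0$ a budget. Each bid $b_k(\tau)$ of a dish $v_k$ has a cost $c_k>0$. For each task $t_{i,j}^\tau$ there is a finite collaborator group set $\mathbb{G}_{i,j}(\tau)$; each group $g_\lambda(\tau)$ is a nonempty finite set of bids with a real utility $U^\tau_{i,j\to\lambda}$ and a positive integer counter $n_\lambda$. CSTP algorithm. For each task $t_{i,j}^\tau\in\mathbb{T}_i(\tau)$: set $g_\lambda(\tau)=\emptyset$. While $g_\lambda(\tau)=\emptyset$ and $\mathbb{G}_{i,j}(\tau)\neq\emptyset$: (1) $n_{sum}=\ln\sum_{g_\lambda(\tau)\in\mathbb{G}_{i,j}(\tau)} n_\lambda$; (2) $g_{\bar\lambda}(\tau)=\arg\max_{g_\lambda(\tau)\in\mathbb{G}_{i,j}(\tau),\,U^\tau_{i,j\to\lambda}>0}\ \frac{U^\tau_{i,j\to\lambda}}{\sum_{b_k(\tau)\in g_\lambda(\tau)}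 c_k}+\sqrt{\frac{2n_{sum}}{n_\lambda}}$; (3) remove $g_{\bar\lambda}(\tau)$ from $\mathbb{G}_{i,j}(\tau)$; (4) $n'_{sum}=\ln\sum_{g_\lambda(\tau)\in\mathbb{G}_{i,j}(\tau)} n_\lambda$ over the remaining groups; (5) $\mathcal{U}=\max_{g_\lambda(\tau)\in\mathbb{G}_{i,j}(\tau),\,U^\tau_{i,j\to\lambda}>0}\ \frac{U^\tau_{i,j\to\lambda}}{\sum_{b_k(\tau)\in g_\lambda(\tau)} c_k}+\sqrt{\frac{2n'_{sum}}{n_\lambda}}$ over the remaining groups; (6) $p^\tau_{ij\to\bar\lambda}=\frac{U^\tau_{i,j\to\bar\lambda}+\sum_{b_k(\tau)\in g_{\bar\lambda}(\tau)}c_k\sqrt{2n_{sum}/n_{\bar\lambda}}}{\mathcal{U}}$; (7) if $p^\tau_{ij\to\bar\lambda}\le\beta^\tau$: set $\beta^\tau\leftarrow\beta^\tau-p^\tau_{ij\to\bar\lambda}$, $g_\lambda(\tau)\leftarrow g_{\bar\lambda}(\tau)$, $n_{\bar\lambda}\leftarrow n_{\bar\lambda}+1$, and $p^\tau_{ij\to k}=\frac{c_k}{\sum_{b_{k}(\tau)\in g_{\bar\lambda}(\tau)}c_{k}}\,p^\tau_{ij\to\bar\lambda}$ for all $b_k(\tau)\in g_{\bar\lambda}(\tau)$. *)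

From HB Require Import structures.
From mathcomp Require Import all_boot all_order all_algebra.
From mathcomp Require Import reals exp.
Set Implicit Arguments. Unset Strict Implicit. Unset Printing Implicit Defensive.
Import Order.TTheory GRing.Theory Num.Theory.
Local Open Scope ring_scope.

(* Data of one CSTP instance (a fixed time slot tau).
   - satellites are 'I_nsat ;
   - tasks i : the (duplicate-free) list of task identifiers of T_i(tau) ;
   - groups i j : the (duplicate-free) list of group identifiers of G_{i,j}(tau) ;
   - members l : the bids (identifiers) of group g_l ;
   - cost k : the cost c_k of bid b_k ;
   - util i j l : the utility U_{i,j -> l} ;
   - counters n : nat -> nat  (n_l, global, updated by the algorithm). *)
Section CSTP.
Variable R : realType.
Variable nsat : nat.
Variable groups : 'I_nsat -> nat -> seq nat.
Variable members : nat -> seq nat.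
Variable cost : nat -> R.
Variable util : 'I_nsat -> nat -> nat -> R.

Definition gcost (l : nat) : R := \sum_(k <- members l) cost k.

Definition nsum (n : nat -> nat) (G : seq nat) : R :=
  ln ((\sum_(l <- G) n l)%N)%:R.

Definition score (i : 'I_nsat) (j : nat) (n : nat -> nat) (G : seq nat) (l : nat) : R :=
  util i j l / gcost l + Num.sqrt (2 * nsum n G / (n l)%:R).

(* l is an admissible argmax of step (2) over G *)
Definition is_argmax (i : 'I_nsat) (j : nat) (n : nat -> nat) (G : seq nat) (l : nat) :=
  [/\ l \in G, 0 < util i j l &
      forall m, m \in G -> 0 < util i j m -> score i j n G m <= score i j n G l].

(* step (5): max over the remaining groups with positive utility;
   convention: 0 if there is no such group. *)
Definition Umax (i : 'I_nsat) (j : nat) (n : nat -> nat) (G : seq nat) : R :=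
  \big[Num.max/0]_(m <- G | 0 < util i j m) score i j n G m.

(* step (6): the total payment for the selected group lb
   (G is the collection before removal, G' = rem lb G after removal) *)
Definition payment (i : 'I_nsat) (j : nat) (n : nat -> nat) (G : seq nat) (lb : nat) : R :=
  (util i j lb + gcost lb * Num.sqrt (2 * nsum n G / (n lb)%:R))
    / Umax i j n (rem lb G).

Definition incr (n : nat -> nat) (l : nat) : nat -> nat :=
  fun m => if m == l then (n m).+1 else n m.

(* The while loop of CSTP for task t_{i,j}, as a big-step relation.
   wloop i j G beta n k beta' n' sel : starting with remaining groups G,
   budget beta and counters n (and g = emptyset), the loop performs exactly
   k iterations and ends with budget beta', counters n', selected group sel. *)
Inductive wloop (i : 'I_nsat) (j : nat) :
  seq nat -> R -> (nat -> nat) -> nat -> R -> (nat -> nat) -> option nat -> Prop :=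
| wloop_empty beta n : wloop i j [::] beta n 0 beta n None
| wloop_nopos G beta n :
    G != [::] -> (forall m, m \in G -> util i j m <= 0) ->
    wloop i j G beta n 0 beta n None
| wloop_accept G beta n lb :
    is_argmax i j n G lb ->
    payment i j n G lb <= beta ->
    wloop i j G beta n 1 (beta - payment i j n G lb) (incr n lb) (Some lb)
| wloop_reject G beta n lb k beta' n' sel :
    is_argmax i j n G lb ->
    beta < payment i j n G lb ->
    wloop i j (rem lb G) beta n k beta' n' sel ->
    wloop i j G beta n k.+1 beta' n' sel.

(* The outer "for each task" loop for satellite v_i; the number k counts the
   total number of while-loop iterations performed (unit cost each). *)
Inductive cstp_run (i : 'I_nsat) :
  seq nat -> R -> (nat -> nat) -> nat -> R -> (nat -> nat) -> Prop :=
| cstp_nil beta n : cstp_run i [::] beta n 0 beta n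
| cstp_cons j ts beta n k1 beta1 n1 sel k2 beta2 n2 :
    wloop i j (groups i j) beta n k1 beta1 n1 sel ->
    cstp_run i ts beta1 n1 k2 beta2 n2 ->
    cstp_run i (j :: ts) beta n (k1 + k2) beta2 n2.
End CSTP.

Definition Tmax (nsat : nat) (tasks : 'I_nsat -> seq nat) : nat :=
  \max_(i < nsat) size (tasks i).
Definition Gmax (nsat : nat) (tasks : 'I_nsat -> seq nat)
    (groups : 'I_nsat -> nat -> seq nat) : nat :=
  \max_(i < nsat) \max_(j <- tasks i) size (groups i j).

From HB Require Import structures.
From mathcomp Require Import all_boot all_order all_algebra.
From mathcomp Require Import reals exp.
Set Implicit Arguments. Unset Strict Implicit. Unset Printing Implicit Defensive.
Import Order.TTheory GRing.Theory Num.Theory.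
Local Open Scope ring_scope.

(* Every iteration of the while loop for a task removes the selected group
   from the remaining collection, so that loop runs at most |G_{i,j}| times;
   summing over the tasks of v_i gives at most |T_i| * max |G_{i,j}| unit
   steps, and both factors are bounded by the global maxima. *)

Section IterationCount.
Variables (R : realType) (nsat : nat) (groups : 'I_nsat -> nat -> seq nat).
Variables (members : nat -> seq nat) (cost : nat -> R).
Variables (util : 'I_nsat -> nat -> nat -> R) (i : 'I_nsat).

Lemma wloop_iterations_le_size j G beta n k beta' n' sel :
  wloop members cost util i j G beta n k beta' n' sel -> (k <= size G)%N.
Proof.
elim=> // [G0 _ _ lb [lbG _ _] _ | G0 _ _ lb k0 _ _ _ [lbG _ _] _ _ IH].
- by case: G0 lbG.
- by rewrite (size_rem lbG) in IH; case: G0 lbG IH.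
Qed.

Lemma cstp_run_iterations_le_sum ts beta n k beta' n' :
  cstp_run groups members cost util i ts beta n k beta' n' ->
  (k <= \sum_(j <- ts) size (groups i j))%N.
Proof.
elim=> [|j ts0 b0 n0 k1 b1 n1 sel k2 b2 n2 loop_j _ IH]; first by rewrite big_nil.
by rewrite big_cons leq_add // (wloop_iterations_le_size loop_j).
Qed.

End IterationCount.

Lemma sumn_seq_le_size_mul (I : eqType) (r : seq I) (F : I -> nat) (M : nat) :
  (forall x, x \in r -> F x <= M)%N -> (\sum_(x <- r) F x <= size r * M)%N.
Proof.
move=> le_FM; rewrite mulnC -iter_addn_0 -count_predT -big_const_seq.
by rewrite big_seq_cond [leqRHS]big_seq_cond; apply: leq_sum => x /andP[/le_FM].
Qed.

Lemma size_le_Tmax nsat (tasks : 'I_nsat -> seq nat) i :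
  (size (tasks i) <= Tmax tasks)%N.
Proof. exact: (@leq_bigmax _ (fun i0 => size (tasks i0))). Qed.

Lemma size_groups_le_Gmax nsat (tasks : 'I_nsat -> seq nat)
    (groups : 'I_nsat -> nat -> seq nat) i j :
  j \in tasks i -> (size (groups i j) <= Gmax tasks groups)%N.
Proof.
move=> jT.
apply: leq_trans
  (@leq_bigmax _ (fun i0 => \max_(j0 <- tasks i0) size (groups i0 j0)) i).
exact: (@leq_bigmax_seq _ _ xpredT (fun j0 => size (groups i j0)) _ jT).
Qed.

Theorem theorem4 :
  exists c : nat,
  forall (R : realType) (nsat : nat) (tasks : 'I_nsat -> seq nat)
    (groups : 'I_nsat -> nat -> seq nat) (members : nat -> seq nat)
    (cost : nat -> R) (util : 'I_nsat -> nat -> nat -> R)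
    (n0 : nat -> nat) (beta0 : R),
    (forall i, uniq (tasks i)) ->
    (forall i j, uniq (groups i j)) ->
    (forall l, members l != [::]) ->
    (forall k, 0 < cost k) ->
    (forall l, (0 < n0 l)%N) ->
    0 <= beta0 ->
  forall (i : 'I_nsat) (k : nat) (beta' : R) (n' : nat -> nat),
    cstp_run groups members cost util i (tasks i) beta0 n0 k beta' n' ->
    (k <= c * (Tmax tasks * Gmax tasks groups))%N.
Proof.
exists 1%N => R nsat tasks groups members cost util n0 beta0 _ _ _ _ _ _
  i k beta' n' run.
rewrite mul1n; apply: leq_trans (cstp_run_iterations_le_sum run) _.
apply: (@leq_trans (size (tasks i) * Gmax tasks groups)).
  by apply: sumn_seq_le_size_mul => j; exact: size_groups_le_Gmax.
by rewrite leq_mul2r size_le_Tmax orbT.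
Qed.
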